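(* Let $G=(V,E,\omega)\in\mathcal G$, $\gamma\geq0$, and $\tau>0$. If $S^0\subset V$ and $\{S^k\}_{k=1}^N$ ($N\in\mathbb N\cup\{\infty\}$) is a sequence generated by the OKMBO scheme, then there is $K\geq0$ such that $S^k=S^K$ for all $k\geq K$.
   Context: $\mathcal{G}$ is the set of finite, simple, connected, undirected, edge-weighted graphs $G=(V,E,\omega)$ with $V=\{1,\dots,n\}$, $n\geq2$, weights $\omega_{ij}=\omega_{ji}>0$ on edges, $0$ otherwise. $d_i=\sum_j\omega_{ij}$. $\mathcal V$: functions $V\to\mathbb R$. Fixed $r\in[0,1]$: $(\Delta u)_i=d_i^{-r}\sum_j\omega_{ij}(u_i-u_j)$, $\mathcal M(u)=\sum_id_i^ru_i$, $\mathcal A(u)=\frac{\mathcal M(u)}{\sum_id_i^r}\chi_V$ ($\chi_S$ indicator of $S$). For $u\in\mathcal V$ let $\varphi$ be the unique solution of $\Delta\varphi=u-\mathcal A(u)$, $\mathcal M(\varphi)=0$, and $Lu:=\Delta u+\gamma\varphi$. OKMBO scheme: given $S^0\subset V$, for $k=1,\dots,N$ let $u=e^{-\tau L}\chi_{S^{k-1}}$ (the time-$\tau$ solution of $du/dt=-Lu$, $u(0)=\chi_{S^{k-1}}$) and $S^k=\{i\in V:u_i\geq\frac12\}$. *)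

From HB Require Import structures.
From mathcomp Require Import all_boot all_order all_algebra.
From mathcomp Require Import all_classical all_reals all_analysis.
Set Implicit Arguments. Unset Strict Implicit. Unset Printing Implicit Defensive.
Import Order.TTheory GRing.Theory Num.Theory.
Import numFieldNormedType.Exports.
Local Open Scope ring_scope.

(* Vertices V = {1..n} are represented by 'I_n; functions V -> R by row
   vectors 'rV[R]_n (entry u 0 i); weights by w : 'I_n -> 'I_n -> R. *)

Section OKMBO.
Variables (R : realType) (n : nat).

Definition edge (w : 'I_n -> 'I_n -> R) : rel 'I_n := fun i j => 0 < w i j.

Definition is_weighted_graph (w : 'I_n -> 'I_n -> R) : Prop :=
  (2 <= n)%N /\
  (forall i j, w i j = w j i) /\
  (forall i j, 0 <= w i j) /\
  (forall i, w i i = 0) /\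
  (forall i j, connect (edge w) i j).

Definition deg (w : 'I_n -> 'I_n -> R) (i : 'I_n) : R := \sum_j w i j.

Definition lap (r : R) (w : 'I_n -> 'I_n -> R) (u : 'rV[R]_n) : 'rV[R]_n :=
  \row_i (powR (deg w i) (- r) * \sum_j w i j * (u 0 i - u 0 j)).

Definition mass (r : R) (w : 'I_n -> 'I_n -> R) (u : 'rV[R]_n) : R :=
  \sum_i powR (deg w i) r * u 0 i.

Definition avg (r : R) (w : 'I_n -> 'I_n -> R) (u : 'rV[R]_n) : 'rV[R]_n :=
  \row_i (mass r w u / \sum_j powR (deg w j) r).

(* phi solves  Delta phi = u - A(u),  M(phi) = 0  (unique on connected G) *)
Definition is_phi (r : R) (w : 'I_n -> 'I_n -> R) (u phi : 'rV[R]_n) : Prop :=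
  lap r w phi = u - avg r w u /\ mass r w phi = 0.

Definition chi (S : {set 'I_n}) : 'rV[R]_n :=
  \row_i (if i \in S then 1 else 0).

Definition okmbo_step (r gamma tau : R) (w : 'I_n -> 'I_n -> R)
    (S S' : {set 'I_n}) : Prop :=
  exists u : R -> 'rV[R]_n,
    u 0 = chi S /\
    (forall t : R, exists phi : 'rV[R]_n,
        is_phi r w (u t) phi /\
        is_derive t 1 u (- (lap r w (u t) + gamma *: phi))) /\
    S' = [set i | 2^-1 <= u tau 0 i].

End OKMBO.

From HB Require Import structures.
From mathcomp Require Import all_boot all_order all_algebra.
From mathcomp Require Import all_classical all_reals all_analysis.
From mathcomp Require Import ring lra zify.
Set Implicit Arguments. Unset Strict Implicit. Unset Printing Implicit Defensive.
Import Order.TTheory GRing.Theory Num.Theory.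
Import numFieldNormedType.Exports.
Local Open Scope ring_scope.

(* Write <u, v> = sum_i d_i^r u_i v_i.  Both Delta and u |-> phi are self-adjoint
   for this inner product, hence so is L, and for any two solutions a, b of
   u' = -Lu the pairing <a s, b t> only depends on s + t.  This yields uniqueness
   of solutions, conservation of <1, u>, the symmetry
   <e^{-tau L} chi_S, chi_T> = <chi_S, e^{-tau L} chi_T> and the positivity
   <v, e^{-tau L} v> = |e^{-tau L/2} v|^2 >= 0.  Consequently the Lyapunov
   functional J(S) = <1 - chi_S, e^{-tau L} chi_S> satisfies
   J(S') <= J(S) + <chi_S' - chi_S, 1 - 2u> for u = e^{-tau L} chi_S, and the last
   term is <= 0 because S' = {u >= 1/2} minimises T |-> <chi_T, 1 - 2u>, with
   equality only if S is contained in S'.  The scheme is deterministic and there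
   are finitely many sets, so the sequence repeats; J is constant along the
   repetition, so the sets increase there, which forces a fixed point. *)

Section MatrixDerivative.
Variables (R : realType) (p q : nat).
Implicit Types M : R -> 'M[R]_(p, q).

Lemma is_derive_mxP M (t : R) dM :
  is_derive t (1 : R) M dM <->
  forall i j, is_derive t (1 : R) (fun x => M x i j) (dM i j).
Proof.
split=> [[dM1 <-] i j|dMij].
  by apply: DeriveDef; [move/derivable_mxP: dM1; apply|rewrite derive_mx// mxE].
have dM1 : derivable M t 1 by apply/derivable_mxP => i j; have [] := dMij i j.
apply: DeriveDef => //; apply/matrixP => i j.
by rewrite derive_mx// mxE; have [] := dMij i j.
Qed.

Lemma is_derive_reflect M (s t : R) dM :
  is_derive (s - t) (1 : R) M dM -> is_derive t (1 : R) (fun x => M (s - x)) (- dM).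
Proof.
move/is_derive_mxP => dMij; apply/is_derive_mxP => i j; rewrite mxE -mulrN1.
have ds : is_derive t (1 : R) (fun x => s - x) (-1).
  by rewrite -[-1]add0r; apply: (is_deriveB (f := cst s)).
exact: (@is_derive1_comp _ (fun y => M y i j) (fun x => s - x) _ _ _ (dMij i j) ds).
Qed.

End MatrixDerivative.

Section WeightedDot.
Variables (R : realType) (n : nat) (r : R) (w : 'I_n -> 'I_n -> R).
Implicit Types (u v x y : 'rV[R]_n) (S : {set 'I_n}).

Definition wdot u v : R := \sum_i powR (deg w i) r * (u 0 i * v 0 i).

Lemma wdotC u v : wdot u v = wdot v u.
Proof. by apply: eq_bigr => i _; rewrite [u 0 i * _]mulrC. Qed.

Lemma wdotDr u v1 v2 : wdot u (v1 + v2) = wdot u v1 + wdot u v2.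
Proof. by rewrite /wdot -big_split; apply: eq_bigr => i _; rewrite !mxE /=; ring. Qed.

Lemma wdotZr u v k : wdot u (k *: v) = k * wdot u v.
Proof. by rewrite /wdot mulr_sumr; apply: eq_bigr => i _; rewrite !mxE /=; ring. Qed.

Lemma wdotNr u v : wdot u (- v) = - wdot u v.
Proof. by rewrite -scaleN1r wdotZr mulN1r. Qed.

Lemma wdotBr u v1 v2 : wdot u (v1 - v2) = wdot u v1 - wdot u v2.
Proof. by rewrite wdotDr wdotNr. Qed.

Lemma wdotDl u1 u2 v : wdot (u1 + u2) v = wdot u1 v + wdot u2 v.
Proof. by rewrite wdotC wdotDr !(wdotC v). Qed.

Lemma wdotNl u v : wdot (- u) v = - wdot u v.
Proof. by rewrite wdotC wdotNr wdotC. Qed.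

Lemma wdotZl u v k : wdot (k *: u) v = k * wdot u v.
Proof. by rewrite wdotC wdotZr wdotC. Qed.

Lemma wdot0l v : wdot 0 v = 0.
Proof. by rewrite -(scale0r (0 : 'rV[R]_n)) wdotZl mul0r. Qed.

Lemma wdotBl u1 u2 v : wdot (u1 - u2) v = wdot u1 v - wdot u2 v.
Proof. by rewrite wdotDl wdotNl. Qed.

Lemma wdot_term_ge0 u i : 0 <= powR (deg w i) r * (u 0 i * u 0 i).
Proof. by rewrite -expr2 mulr_ge0 ?powR_ge0 ?sqr_ge0. Qed.

Lemma wdot_ge0 u : 0 <= wdot u u.
Proof. by apply: sumr_ge0 => i _; apply: wdot_term_ge0. Qed.

Lemma wdot_avg x u :
  wdot x (avg r w u) = mass r w x * (mass r w u / \sum_j powR (deg w j) r).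
Proof.
by rewrite /wdot /mass mulr_suml; apply: eq_bigr => i _; rewrite !mxE /mass; ring.
Qed.

Lemma is_derive_wdot (a b : R -> 'rV[R]_n) (t : R) da db :
  is_derive t (1 : R) a da -> is_derive t (1 : R) b db ->
  is_derive t (1 : R) (fun s => wdot (a s) (b s)) (wdot da (b t) + wdot (a t) db).
Proof.
move=> /is_derive_mxP da_ij /is_derive_mxP db_ij.
have dterm i : is_derive t (1 : R)
    (fun s => powR (deg w i) r * (a s 0 i * b s 0 i))
    (powR (deg w i) r * (da 0 i * b t 0 i + a t 0 i * db 0 i)).
  apply: is_derive_eq (is_deriveZ _ (is_deriveM (da_ij 0 i) (db_ij 0 i))) _.
  by rewrite /GRing.scale /=; ring.
have -> : wdot da (b t) + wdot (a t) db =
    \sum_i powR (deg w i) r * (da 0 i * b t 0 i + a t 0 i * db 0 i).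
  by rewrite /wdot -big_split; apply: eq_bigr => i _; rewrite mulrDr.
by have := is_derive_sum dterm; rewrite fct_sumE.
Qed.

Definition threshold u : {set 'I_n} := [set i | 2^-1 <= u 0 i].

Lemma threshold_gain_le0 (x : R) (b : bool) :
  ((if 2^-1 <= x then 1 else 0) - (if b then 1 else 0)) * (1 - 2 * x) <= 0.
Proof. by case: b; have [?|?] := leP 2^-1 x; lra. Qed.

Lemma wdot_threshold_le0 u S :
  wdot (chi R (threshold u) - chi R S) (const_mx 1 - 2 *: u) <= 0.
Proof.
apply: sumr_le0 => i _; rewrite !mxE inE.
exact: mulr_ge0_le0 (powR_ge0 _ _) (threshold_gain_le0 _ _).
Qed.

Hypothesis deg_gt0 : forall i, 0 < deg w i.

Lemma wdot_threshold_eq0 u S :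
  wdot (chi R (threshold u) - chi R S) (const_mx 1 - 2 *: u) = 0 ->
  S \subset threshold u.
Proof.
move=> gain0; apply/fintype.subsetP => i iS.
apply: contraT; rewrite inE -ltNge => ui.
have term_lt0 : powR (deg w i) r * ((0 - 1) * (1 - 2 * u 0 i)) < 0.
  by rewrite pmulr_rlt0 ?powR_gt0 //; lra.
have rest_le0 : \sum_(j | j != i) powR (deg w j) r *
    ((chi R (threshold u) - chi R S) 0 j * (const_mx 1 - 2 *: u) 0 j) <= 0.
  apply: sumr_le0 => j _; rewrite !mxE inE.
  exact: mulr_ge0_le0 (powR_ge0 _ _) (threshold_gain_le0 _ _).
move: gain0; rewrite /wdot (bigD1 i) //= !mxE inE iS leNgt ui /=.
lra.
Qed.

Hypothesis w_sym : forall i j, w i j = w j i.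

Lemma wdot_lapE u v :
  wdot (lap r w u) v =
  \sum_i \sum_j w i j * (u 0 i * v 0 i) - \sum_i \sum_j w i j * (u 0 j * v 0 i).
Proof.
rewrite /wdot -sumrB; apply: eq_bigr => i _; rewrite !mxE mulrA.
rewrite powRN mulrA mulfV ?gt_eqF ?powR_gt0 // mul1r mulr_suml -sumrB.
by apply: eq_bigr => j _; ring.
Qed.

Lemma lap_selfadj u v : wdot (lap r w u) v = wdot u (lap r w v).
Proof.
have swap x y : \sum_i \sum_j w i j * (x 0 j * y 0 i) =
    \sum_i \sum_j w i j * (y 0 j * x 0 i).
  rewrite exchange_big; apply: eq_bigr => i _; apply: eq_bigr => j _.
  by rewrite w_sym [x 0 i * _]mulrC.
rewrite [RHS]wdotC !wdot_lapE swap; congr (_ - _).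
by apply: eq_bigr => i _; apply: eq_bigr => j _; rewrite [u 0 i * _]mulrC.
Qed.

Lemma wdot_eq0 u : (wdot u u == 0) = (u == 0).
Proof.
apply/idP/eqP => [/eqP uu0|->]; last by rewrite wdot0l.
apply/rowP => i.
have /eqP := @psumr_eq0P _ _ predT _ (fun j _ => wdot_term_ge0 u j) uu0 i isT.
by rewrite mulf_eq0 gt_eqF ?powR_gt0 //= mulf_eq0 orbb mxE => /eqP.
Qed.

Lemma phi_selfadj u v pu pv :
  is_phi r w u pu -> is_phi r w v pv -> wdot pu v = wdot u pv.
Proof.
move=> [lap_pu mass_pu] [lap_pv mass_pv].
have -> : v = lap r w pv + avg r w v by rewrite lap_pv subrK.
have -> : u = lap r w pu + avg r w u by rewrite lap_pu subrK.
rewrite wdotDr wdot_avg mass_pu mul0r addr0.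
by rewrite wdotDl [wdot (avg _ _ _) _]wdotC wdot_avg mass_pv mul0r addr0 lap_selfadj.
Qed.

Variable gamma : R.

Lemma L_selfadj u v pu pv : is_phi r w u pu -> is_phi r w v pv ->
  wdot (lap r w u + gamma *: pu) v = wdot u (lap r w v + gamma *: pv).
Proof.
move=> phi_u phi_v.
by rewrite wdotDl wdotDr lap_selfadj wdotZl wdotZr (phi_selfadj phi_u phi_v).
Qed.

Definition is_Lflow (a : R -> 'rV[R]_n) : Prop :=
  forall t, exists phi, is_phi r w (a t) phi /\
    is_derive t (1 : R) a (- (lap r w (a t) + gamma *: phi)).

Lemma wdot_Lflow_shift a b : is_Lflow a -> is_Lflow b ->
  forall s t, wdot (a s) (b t) = wdot (a 0) (b (s + t)).
Proof.
move=> flow_a flow_b s t.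
pose g (x : R) := wdot (a x) (b (s + t - x)).
have dg (x : R) : is_derive x (1 : R) g 0.
  have [pa [phi_a da]] := flow_a x.
  have [pb [phi_b db]] := flow_b (s + t - x).
  apply: is_derive_eq (is_derive_wdot da (is_derive_reflect db)) _.
  by rewrite opprK wdotNl (L_selfadj phi_a phi_b) addNr.
by have := is_derive_0_is_cst s 0 dg; rewrite /g subr0 addrC addKr.
Qed.

Lemma wdot_Lflow_diff a b t : is_Lflow a -> is_Lflow b ->
  wdot (a 0 - b 0) (a (t + t) - b (t + t)) = wdot (a t - b t) (a t - b t).
Proof.
move=> flow_a flow_b; have shift := wdot_Lflow_shift _ _ ^~ t t.
by rewrite !wdotBl !wdotBr (shift _ _ flow_a flow_a) (shift _ _ flow_a flow_b)
  (shift _ _ flow_b flow_a) (shift _ _ flow_b flow_b).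
Qed.

Lemma Lflow_unique a b t : is_Lflow a -> is_Lflow b -> a 0 = b 0 -> a t = b t.
Proof.
move=> flow_a flow_b ab0; apply/eqP; rewrite -subr_eq0 -wdot_eq0.
by rewrite -(wdot_Lflow_diff t flow_a flow_b) ab0 subrr wdot0l.
Qed.

Lemma lap_const c : lap r w (const_mx c) = 0.
Proof.
by apply/rowP => i; rewrite !mxE big1 ?mulr0 // => j _; rewrite !mxE subrr mulr0.
Qed.

Lemma avg_one : avg r w (const_mx 1) = const_mx 1.
Proof.
apply/rowP => i; rewrite !mxE /mass; under eq_bigr do rewrite mxE mulr1.
rewrite divff // gt_eqF // (bigD1 i) //= ltr_pwDl ?powR_gt0 ?sumr_ge0 // => j _.
exact: powR_ge0.
Qed.

Lemma Lflow_one : is_Lflow (fun=> const_mx 1).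
Proof.
move=> t; exists 0; split; [split|].
- by rewrite avg_one subrr; exact: (lap_const 0).
- by rewrite /mass big1 // => i _; rewrite mxE mulr0.
- by rewrite lap_const scaler0 addr0 oppr0; exact: is_derive_cst.
Qed.

Definition okmbo_energy S u := wdot (const_mx 1 - chi R S) u.

Section OkmboStep.
Variables (a b : R -> 'rV[R]_n) (tau : R) (S : {set 'I_n}).
Hypotheses (flow_a : is_Lflow a) (flow_b : is_Lflow b).
Hypotheses (a0 : a 0 = chi R S) (b0 : b 0 = chi R (threshold (a tau))).

Lemma okmbo_energy_step :
  okmbo_energy (threshold (a tau)) (b tau) <= okmbo_energy S (a tau) +
    wdot (chi R (threshold (a tau)) - chi R S) (const_mx 1 - 2 *: a tau).
Proof.
set T := threshold (a tau); have shift := wdot_Lflow_shift.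
have mass_a : wdot (const_mx 1) (a tau) = wdot (chi R S) (const_mx 1).
  by rewrite wdotC (shift _ _ flow_a Lflow_one tau 0) a0.
have mass_b : wdot (const_mx 1) (b tau) = wdot (chi R T) (const_mx 1).
  by rewrite wdotC (shift _ _ flow_b Lflow_one tau 0) b0.
have sym : wdot (chi R S) (b tau) = wdot (chi R T) (a tau).
  by rewrite -a0 -b0 [RHS]wdotC (shift _ _ flow_a flow_b tau 0) addr0.
have psd : 0 <= wdot (chi R S - chi R T) (a tau - b tau).
  by rewrite -a0 -b0 (splitr tau) wdot_Lflow_diff // wdot_ge0.
rewrite /okmbo_energy !wdotBl !wdotBr !wdotZr in psd *.
lra.
Qed.

Lemma okmbo_energy_le :
  okmbo_energy (threshold (a tau)) (b tau) <= okmbo_energy S (a tau).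
Proof. by rewrite (le_trans okmbo_energy_step) // gerDl wdot_threshold_le0. Qed.

Lemma okmbo_energy_eq_subset :
  okmbo_energy (threshold (a tau)) (b tau) = okmbo_energy S (a tau) ->
  S \subset threshold (a tau).
Proof.
move=> energy_eq; apply: wdot_threshold_eq0; apply/le_anti.
rewrite wdot_threshold_le0 -(lerD2l (okmbo_energy S (a tau))) addr0.
by rewrite -{1}energy_eq okmbo_energy_step.
Qed.

End OkmboStep.

End WeightedDot.

Lemma exists_repeat (T : finType) (f : nat -> T) : exists j k, (j < k)%N /\ f j = f k.
Proof.
apply: contrapT => no_repeat; pose g (i : 'I_#|T|.+1) := f i.
suff /leq_card : injective g by rewrite card_ord ltnn.
move=> x y gxy; apply: val_inj; case: (ltngtP x y) => // lt; exfalso; apply: no_repeat.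
  by exists x, y.
by exists y, x.
Qed.

Lemma lyapunov_eventually_const (disp : Order.disp_t) (X : porderType disp)
    (T : finType) (S : nat -> {set T}) (J : nat -> X) :
  (forall j k, S j = S k -> S j.+1 = S k.+1) ->
  (forall j k, S j = S k -> J j = J k) ->
  (forall k, (J k.+1 <= J k)%O) ->
  (forall k, J k.+1 = J k -> S k \subset S k.+1) ->
  exists K, forall k, (K <= k)%N -> S k = S K.
Proof.
move=> S_det J_det J_step J_eq.
have [j [k [lt_jk Sjk]]] := exists_repeat S.
have J_noninc := Order.NatMonotonyTheory.nonincnP J_step.
have S_incr m : (j <= m < k)%N -> S m \subset S m.+1.
  move=> /andP[jm mk]; apply: J_eq; apply/le_anti; rewrite J_step /=.
  by rewrite (le_trans (J_noninc _ _ jm)) // (J_det _ _ Sjk) J_noninc.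
have S_fixed : S j.+1 = S j.
  apply/eqP; rewrite finset.eqEsubset S_incr ?leqnn ?lt_jk // andbT Sjk.
  apply: (@homo_leq_in _ [pred m | j <= m <= k]%N S (fun A B => A \subset B));
    rewrite ?inE //=.
  - by move=> B A C; apply: fintype.subset_trans.
  - by move=> a b /andP[ja _] /andP[_ bk] c /andP[ac cb]; rewrite inE; lia.
  - by move=> m /andP[jm _] /andP[_ mk]; rewrite S_incr ?jm.
  - by rewrite leqnSn.
  - by rewrite leqnn ltnW.
have S_stay d : S (j + d)%N = S j.
  by elim: d => [|d IH]; rewrite ?addn0 // addnS (S_det _ _ IH) S_fixed.
by exists j => m jm; rewrite -(subnKC jm) S_stay.
Qed.

Lemma weighted_graph_deg_gt0 (R : realType) (n : nat) (w : 'I_n -> 'I_n -> R) :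
  is_weighted_graph w -> forall i, 0 < deg w i.
Proof.
move=> [n_ge2 [_ [w_ge0 [_ w_conn]]]] i.
have /card_gt0P [j] : (0 < #|predC1 i|)%N by rewrite cardC1 card_ord; lia.
rewrite inE => ji; have /connectP [[|x p] /= path_ij last_ij] := w_conn i j.
  by rewrite last_ij eqxx in ji.
move: path_ij => /andP[w_ix _]; rewrite /deg (bigD1 x) //=.
by rewrite (lt_le_trans w_ix) // lerDl sumr_ge0.
Qed.

Unset Implicit Arguments.

Theorem corollary5p7 (R : realType) (n : nat) (w : 'I_n -> 'I_n -> R)
  (hG : is_weighted_graph w) (r gamma tau : R)
  (hr : 0 <= r <= 1) (hgamma : 0 <= gamma) (htau : 0 < tau)
  (S : nat -> {set 'I_n})
  (hS : forall k, okmbo_step r gamma tau w (S k) (S k.+1)) :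
  exists K : nat, forall k : nat, (K <= k)%N -> S k = S K.
Proof.
have deg_gt0 := weighted_graph_deg_gt0 hG.
have w_sym : forall i j, w i j = w j i by case: hG => _ [].
have [U hU] := choice hS.
have U0 k : U k 0 = chi R (S k) by case: (hU k).
have flow k : is_Lflow r w gamma (U k) by case: (hU k) => _ [].
have S_next k : S k.+1 = threshold (U k tau) by case: (hU k) => _ [].
have U_next0 k : U k.+1 0 = chi R (threshold (U k tau)) by rewrite U0 S_next.
have U_det j k : S j = S k -> U j tau = U k tau.
  move=> Sjk; apply: (Lflow_unique deg_gt0 w_sym tau (flow j) (flow k)).
  by rewrite !U0 Sjk.
apply: (@lyapunov_eventually_const _ _ _ S (fun k => okmbo_energy r w (S k) (U k tau)))
  => [j k Sjk|j k Sjk|k|k].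
- by rewrite !S_next (U_det _ _ Sjk).
- by rewrite /= Sjk (U_det _ _ Sjk).
- rewrite /= S_next.
  apply: (okmbo_energy_le deg_gt0 w_sym (flow k) (flow k.+1)).
    exact: U0.
  exact: U_next0.
- rewrite /= S_next.
  apply: (okmbo_energy_eq_subset deg_gt0 w_sym (flow k) (flow k.+1)).
    exact: U0.
  exact: U_next0.
Qed.
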